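(* Let $\mathcal A$ be a Banach algebra and $(a_\alpha)_{\alpha\in\Lambda}$ a bounded net in $\mathcal A$ which is quasi-central, i.e. $\lim_\alpha(aa_\alpha-a_\alpha a)=0$ for all $a\in\mathcal A$. Put $I(a_\alpha)=\{a\in\mathcal A:\lim_\alpha aa_\alpha=a\}$, $K(a_\alpha)=\{a\in\mathcal A:\lim_\alpha aa_\alpha=0\}$, $C(a_\alpha)=\{a\in\mathcal A:(aa_\alpha)_\alpha \text{ is convergent}\}$, $L(a_\alpha)=\{\lim_\alpha aa_\alpha: a\in C(a_\alpha)\}$. If $L(a_\alpha)=I(a_\alpha)$ and $\mathcal A$ is $C(a_\alpha)$-weakly amenable, then (i) $\mathcal A$ is $I(a_\alpha)$-weakly amenable, and (ii) $\mathcal A$ is $K(a_\alpha)$-weakly amenable.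
   Context: The sets $I(a_\alpha),K(a_\alpha),C(a_\alpha),L(a_\alpha)$ are closed two-sided ideals of $\mathcal A$ (the ''net ideals''). For a closed two-sided ideal $J$, $J^*$ is a Banach $\mathcal A$-bimodule with $\langle x,a\cdot f\rangle=\langle xa,f\rangle$, $\langle x,f\cdot a\rangle=\langle ax,f\rangle$; $\mathcal A$ is $J$-weakly amenable if every derivation $D:\mathcal A\to J^*$ (continuous linear map with $D(ab)=a\cdot D(b)+D(a)\cdot b$) is inner, i.e. of the form $D(a)=a\cdot f-f\cdot a$ for some $f\in J^*$. *)

From HB Require Import structures.
From mathcomp Require Import all_boot all_order all_algebra.
From mathcomp Require Import all_classical all_reals all_analysis.
Set Implicit Arguments. Unset Strict Implicit. Unset Printing Implicit Defensive.
Import Order.TTheory GRing.Theory Num.Theory.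
Import numFieldNormedType.Exports.
Local Open Scope ring_scope.
Local Open Scope classical_set_scope.

Definition banach_algebra_mul (K : numFieldType) (A : completeNormedModType K)
  (mul : A -> A -> A) : Prop :=
  [/\ (forall a b c, mul a (mul b c) = mul (mul a b) c),
      (forall (k : K) a b c, mul (k *: a + b) c = k *: mul a c + mul b c),
      (forall (k : K) a b c, mul c (k *: a + b) = k *: mul c a + mul c b)
    & (forall a b, `|mul a b| <= `|a| * `|b|)].

Definition directed_set (L : Type) (le : L -> L -> Prop) : Prop :=
  [/\ (exists l : L, True),
      (forall l, le l l),
      (forall l m n, le l m -> le m n -> le l n)
    & (forall l m, exists n, le l n /\ le m n)].

Definition net_cvg (K : numFieldType) (V : normedModType K) (L : Type)
  (le : L -> L -> Prop) (x : L -> V) (y : V) : Prop :=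
  forall e : K, 0 < e -> exists l0, forall l, le l0 l -> `|x l - y| < e.

Definition net_convergent (K : numFieldType) (V : normedModType K) (L : Type)
  (le : L -> L -> Prop) (x : L -> V) : Prop :=
  exists y, net_cvg le x y.

Definition net_bounded (K : numFieldType) (V : normedModType K) (L : Type)
  (x : L -> V) : Prop :=
  exists M : K, forall l, `|x l| <= M.

Definition quasi_central (K : numFieldType) (A : completeNormedModType K)
  (mul : A -> A -> A) (L : Type) (le : L -> L -> Prop) (u : L -> A) : Prop :=
  forall a : A, net_cvg le (fun l => mul a (u l) - mul (u l) a) 0.

Definition netI (K : numFieldType) (A : completeNormedModType K)
  (mul : A -> A -> A) (L : Type) (le : L -> L -> Prop) (u : L -> A) : set A :=
  [set a | net_cvg le (fun l => mul a (u l)) a].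

Definition netK (K : numFieldType) (A : completeNormedModType K)
  (mul : A -> A -> A) (L : Type) (le : L -> L -> Prop) (u : L -> A) : set A :=
  [set a | net_cvg le (fun l => mul a (u l)) 0].

Definition netC (K : numFieldType) (A : completeNormedModType K)
  (mul : A -> A -> A) (L : Type) (le : L -> L -> Prop) (u : L -> A) : set A :=
  [set a | net_convergent le (fun l => mul a (u l))].

Definition netL (K : numFieldType) (A : completeNormedModType K)
  (mul : A -> A -> A) (L : Type) (le : L -> L -> Prop) (u : L -> A) : set A :=
  [set y | exists2 a, netC mul le u a & net_cvg le (fun l => mul a (u l)) y].

(* Elements of the dual J^* of a subspace J of A are represented by
   functions f : A -> K, only their values on J being relevant:
   f is in J^* iff f is linear and bounded on J. *)
Definition dual_elem (K : numFieldType) (A : completeNormedModType K)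
  (J : set A) (f : A -> K) : Prop :=
  (forall (k : K) x y, J x -> J y -> f (k *: x + y) = k * f x + f y) /\
  (exists M : K, forall x, J x -> `|f x| <= M * `|x|).

(* D : A -> J^* (D a is the functional D a on J) is a continuous derivation
   for the bimodule actions <x, a.f> = <xa, f>, <x, f.a> = <ax, f>. *)
Definition is_derivation_into_dual (K : numFieldType) (A : completeNormedModType K)
  (mul : A -> A -> A) (J : set A) (D : A -> A -> K) : Prop :=
  [/\ (forall a, dual_elem J (D a)),
      (forall (k : K) a b x, J x -> D (k *: a + b) x = k * D a x + D b x),
      (exists M : K, forall a x, J x -> `|D a x| <= M * `|a| * `|x|)
    & (forall a b x, J x -> D (mul a b) x = D b (mul x a) + D a (mul b x))].

Definition is_inner_into_dual (K : numFieldType) (A : completeNormedModType K)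
  (mul : A -> A -> A) (J : set A) (D : A -> A -> K) : Prop :=
  exists2 f : A -> K, dual_elem J f &
    forall a x, J x -> D a x = f (mul x a) - f (mul a x).

Definition J_weakly_amenable (K : numFieldType) (A : completeNormedModType K)
  (mul : A -> A -> A) (J : set A) : Prop :=
  forall D : A -> A -> K, is_derivation_into_dual mul J D ->
    is_inner_into_dual mul J D.

From HB Require Import structures.
From mathcomp Require Import all_boot all_order all_algebra.
From mathcomp Require Import all_classical all_reals all_analysis.
Import Order.TTheory GRing.Theory Num.Theory.
Import numFieldNormedType.Exports.
Local Open Scope ring_scope.
Local Open Scope classical_set_scope.

(** A bounded quasi-central net yields a bounded A-bimodule projection P of
  C(a_α) onto I(a_α): P x is the limit of x a_α, quasi-centrality makes P
  commute with right multiplication, and L(a_α) = I(a_α) puts its range in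
  I(a_α), which it fixes. Likewise x ↦ x - P x maps C(a_α) into K(a_α) and
  fixes K(a_α). Precomposing a derivation into J^* with such a retraction
  C(a_α) → J gives a derivation into C(a_α)^*, which is inner, and the
  implementing functional restricted to J makes the original one inner. *)

Set Implicit Arguments.
Unset Strict Implicit.
Unset Printing Implicit Defensive.

Section NetLimits.
Variables (K : numFieldType) (L : Type) (le : L -> L -> Prop).
Hypothesis le_directed : directed_set le.

Lemma net_cvg_lipschitz (V W : normedModType K) (x : L -> V) (y : V)
    (z : L -> W) (w : W) (c : K) :
  net_cvg le x y -> 0 <= c -> (forall l, `|z l - w| <= c * `|x l - y|) ->
  net_cvg le z w.
Proof.
move=> xy c_ge0 zx e e_gt0.
have c1_gt0 : 0 < c + 1 by rewrite ltr_wpDl.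
have [l0 near_y] := xy _ (divr_gt0 e_gt0 c1_gt0).
exists l0 => l /near_y lt_xy; apply: le_lt_trans (zx l) _.
apply: (@le_lt_trans _ _ ((c + 1) * `|x l - y|)).
  by rewrite ler_wpM2r ?lerDl.
by rewrite mulrC -ltr_pdivlMr.
Qed.

Lemma net_cvgZ (V : normedModType K) (x : L -> V) (y : V) (k : K) :
  net_cvg le x y -> net_cvg le (fun l => k *: x l) (k *: y).
Proof.
move=> xy; apply: (net_cvg_lipschitz xy (normr_ge0 k)) => l.
by rewrite -scalerBr normrZ.
Qed.

Lemma net_cvgD (V : normedModType K) (x x' : L -> V) (y y' : V) :
  net_cvg le x y -> net_cvg le x' y' ->
  net_cvg le (fun l => x l + x' l) (y + y').
Proof.
case: le_directed => _ _ le_trans' le_ub xy xy' e e_gt0.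
have e2_gt0 : 0 < e / 2 by rewrite divr_gt0.
have [l1 near_y] := xy _ e2_gt0; have [l2 near_y'] := xy' _ e2_gt0.
have [l0 [l1l0 l2l0]] := le_ub l1 l2.
exists l0 => l l0l.
have l1l := le_trans' _ _ _ l1l0 l0l; have l2l := le_trans' _ _ _ l2l0 l0l.
rewrite opprD addrACA (splitr e); apply: le_lt_trans (ler_normD _ _) _.
by rewrite ltrD ?near_y ?near_y'.
Qed.

Lemma net_cvgB (V : normedModType K) (x x' : L -> V) (y y' : V) :
  net_cvg le x y -> net_cvg le x' y' ->
  net_cvg le (fun l => x l - x' l) (y - y').
Proof.
move=> xy /(net_cvgZ (-1)) xy'; have := net_cvgD xy xy'.
by rewrite scaleN1r; under eq_fun do rewrite scaleN1r.
Qed.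

Lemma net_cvg_uniq (V : normedModType K) (x : L -> V) (y z : V) :
  net_cvg le x y -> net_cvg le x z -> y = z.
Proof.
move=> xy xz; apply/eqP; rewrite -subr_eq0 -normr_le0.
apply/ler_addgt0Pr => e e_gt0; rewrite add0r ltW //.
have [l1 near] := net_cvgB xy xz e_gt0.
case: le_directed => [_ le_refl _ _]; have := near l1 (le_refl l1).
by rewrite subrr sub0r normrN.
Qed.

Lemma net_cvg_norm_le (V : normedModType K) (x : L -> V) (y : V) (c : K) :
  net_cvg le x y -> (forall l, `|x l| <= c) -> `|y| <= c.
Proof.
move=> xy x_le; apply/ler_addgt0Pr => e e_gt0.
have [l0 near_y] := xy _ e_gt0.
case: le_directed => [_ le_refl _ _]; have := near_y l0 (le_refl l0).
rewrite distrC => lt_yx; rewrite -(subrK (x l0) y) addrC.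
by apply: le_trans (ler_normD _ _) _; rewrite lerD ?x_le ?ltW.
Qed.

Definition net_lim (V : normedModType K) (x : L -> V) : V :=
  xget 0 [set y | net_cvg le x y].

Lemma net_limP (V : normedModType K) (x : L -> V) :
  net_convergent le x -> net_cvg le x (net_lim x).
Proof. exact: xgetPex. Qed.

Lemma net_limE (V : normedModType K) (x : L -> V) (y : V) :
  net_cvg le x y -> net_lim x = y.
Proof. by move=> xy; apply: xget_unique => // z /net_cvg_uniq; apply. Qed.

End NetLimits.

Section BanachAlgebra.
Variables (K : numFieldType) (A : completeNormedModType K) (mul : A -> A -> A).
Hypothesis mul_banach : banach_algebra_mul mul.

Lemma bmulBl a b c : mul (a - b) c = mul a c - mul b c.
Proof.
case: mul_banach => _ mulDl _ _; have := mulDl (-1) b a c.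
by rewrite !scaleN1r addrC [RHS]addrC.
Qed.

Lemma bmulBr a b c : mul c (a - b) = mul c a - mul c b.
Proof.
case: mul_banach => _ _ mulDr _; have := mulDr (-1) b a c.
by rewrite !scaleN1r addrC [RHS]addrC.
Qed.

Lemma bmulr0 c : mul c 0 = 0.
Proof. by have := bmulBr 0 0 c; rewrite !subrr. Qed.

Variables (L : Type) (le : L -> L -> Prop).

Lemma net_cvg_bmull b (x : L -> A) (y : A) :
  net_cvg le x y -> net_cvg le (fun l => mul b (x l)) (mul b y).
Proof.
move=> xy; apply: (net_cvg_lipschitz xy (normr_ge0 b)) => l.
by rewrite -bmulBr; case: mul_banach.
Qed.

Lemma net_cvg_bmulr b (x : L -> A) (y : A) :
  net_cvg le x y -> net_cvg le (fun l => mul (x l) b) (mul y b).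
Proof.
move=> xy; apply: (net_cvg_lipschitz xy (normr_ge0 b)) => l.
by rewrite -bmulBl mulrC; case: mul_banach.
Qed.

End BanachAlgebra.

Lemma derivation_bound_ge0 (K : numFieldType) (A : completeNormedModType K)
    (mul : A -> A -> A) (J : set A) (D : A -> A -> K) :
  is_derivation_into_dual mul J D ->
  exists2 M, 0 <= M & forall a x, J x -> `|D a x| <= M * `|a| * `|x|.
Proof.
case=> _ _ [M DM] _; exists `|M| => // a x Jx; have Dax := DM a x Jx.
have bound_ge0 : 0 <= M * `|a| * `|x| := le_trans (normr_ge0 _) Dax.
by rewrite -[X in _ <= X]ger0_norm // !normrM !normr_id in Dax.
Qed.

Section WeakAmenabilityRetract.
Variables (K : numFieldType) (A : completeNormedModType K) (mul : A -> A -> A).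
Variables (C J : set A) (Q : A -> A) (B : K).
Hypothesis J_sub_C : J `<=` C.
Hypothesis Q_J : forall x, C x -> J (Q x).
Hypothesis Q_id : forall x, J x -> Q x = x.
Hypothesis Q_linear :
  forall k x y, C x -> C y -> Q (k *: x + y) = k *: Q x + Q y.
Hypothesis Q_bmulr : forall x a, C x -> Q (mul x a) = mul (Q x) a.
Hypothesis Q_bmull : forall x b, C x -> Q (mul b x) = mul b (Q x).
Hypothesis Q_bounded : forall x, C x -> `|Q x| <= B * `|x|.

Lemma derivation_comp_retract D : is_derivation_into_dual mul J D ->
  is_derivation_into_dual mul C (fun a x => D a (Q x)).
Proof.
move=> derD; have [M M_ge0 DM] := derivation_bound_ge0 derD.
case: derD => D_dual D_linear _ D_leibniz.
have DQM a x : C x -> `|D a (Q x)| <= M * `|a| * B * `|x|.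
  move=> Cx; apply: le_trans (DM _ _ (Q_J Cx)) _.
  by rewrite -[_ * B * _]mulrA ler_wpM2l ?mulr_ge0 ?Q_bounded.
split.
- move=> a; split; last by exists (M * `|a| * B) => x /DQM.
  by move=> k x y Cx Cy; rewrite Q_linear //; apply: (D_dual a).1; apply: Q_J.
- by move=> k a b x Cx; apply/D_linear/Q_J.
- by exists (M * B) => a x /DQM; rewrite [M * B * _]mulrAC.
- move=> a b x Cx; rewrite (Q_bmulr a Cx) (Q_bmull b Cx).
  exact/D_leibniz/Q_J.
Qed.

Lemma weakly_amenable_retract :
  J_weakly_amenable mul C -> J_weakly_amenable mul J.
Proof.
move=> amenC D /derivation_comp_retract /amenC.
case=> f [f_linear [Mf f_bounded]] f_inner.
exists f; last by move=> a x Jx; rewrite -f_inner ?Q_id //; apply: J_sub_C.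
split; last by exists Mf => x /J_sub_C /f_bounded.
by move=> k x y /J_sub_C Cx /J_sub_C /(f_linear k x y Cx).
Qed.

End WeakAmenabilityRetract.

Section NetProjection.
Variables (K : numFieldType) (A : completeNormedModType K) (mul : A -> A -> A).
Variables (L : Type) (le : L -> L -> Prop) (u : L -> A).
Hypothesis mul_banach : banach_algebra_mul mul.
Hypothesis le_directed : directed_set le.

Definition net_proj (x : A) : A := net_lim le (fun l => mul x (u l)).

Lemma netI_sub_netC : netI mul le u `<=` netC mul le u.
Proof. by move=> x Ix; exists x. Qed.

Lemma netK_sub_netC : netK mul le u `<=` netC mul le u.
Proof. by move=> x Kx; exists 0. Qed.

Lemma net_projP x :
  netC mul le u x -> net_cvg le (fun l => mul x (u l)) (net_proj x).
Proof. exact: net_limP. Qed.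

Lemma net_projE x y : net_cvg le (fun l => mul x (u l)) y -> net_proj x = y.
Proof. exact: net_limE. Qed.

Lemma net_proj_id x : netI mul le u x -> net_proj x = x.
Proof. exact: net_projE. Qed.

Lemma net_proj_netK x : netK mul le u x -> net_proj x = 0.
Proof. exact: net_projE. Qed.

Lemma net_proj_linear k x y : netC mul le u x -> netC mul le u y ->
  net_proj (k *: x + y) = k *: net_proj x + net_proj y.
Proof.
move=> /net_projP/(net_cvgZ k) Px /net_projP Py; apply: net_projE.
have := net_cvgD le_directed Px Py; case: mul_banach => _ mulDl _ _.
by under [fun l => mul _ _]eq_fun do rewrite mulDl.
Qed.

Lemma net_proj_bmull x b :
  netC mul le u x -> net_proj (mul b x) = mul b (net_proj x).
Proof.
move=> /net_projP/(net_cvg_bmull mul_banach b) Px; apply: net_projE.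
case: mul_banach Px => mulA _ _ _.
by under eq_fun do rewrite mulA.
Qed.

Hypothesis u_quasi_central : quasi_central mul le u.

Lemma net_proj_bmulr x a :
  netC mul le u x -> net_proj (mul x a) = mul (net_proj x) a.
Proof.
move=> /net_projP/(net_cvg_bmulr mul_banach a) Px; apply: net_projE.
(* (x a) u_l = x (a u_l - u_l a) + (x u_l) a *)
have comm_cvg := net_cvg_bmull mul_banach x (u_quasi_central a).
have := net_cvgD le_directed comm_cvg Px.
rewrite bmulr0 // add0r; case: mul_banach => mulA _ _ _.
by under eq_fun do rewrite bmulBr // !mulA subrK.
Qed.

Hypothesis netL_eq_netI : netL mul le u = netI mul le u.

Lemma net_proj_netI x : netC mul le u x -> netI mul le u (net_proj x).
Proof.
by move=> Cx; rewrite -netL_eq_netI; exists x => //; apply: net_projP.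
Qed.

Lemma subr_net_proj_netK x : netC mul le u x -> netK mul le u (x - net_proj x).
Proof.
move=> Cx; have := net_cvgB le_directed (net_projP Cx) (net_proj_netI Cx).
by rewrite subrr; under eq_fun do rewrite -bmulBl //.
Qed.

Variable B : K.
Hypothesis u_bounded : forall l, `|u l| <= B.

Lemma net_proj_norm x : netC mul le u x -> `|net_proj x| <= B * `|x|.
Proof.
move=> /net_projP Px; apply: (net_cvg_norm_le le_directed Px) => l.
case: mul_banach => _ _ _ mul_norm; apply: le_trans (mul_norm _ _) _.
by rewrite mulrC ler_wpM2r.
Qed.

End NetProjection.

Theorem theorem3p6 (K : numFieldType) (A : completeNormedModType K)
  (mul : A -> A -> A) (Lam : Type) (le : Lam -> Lam -> Prop) (u : Lam -> A) :
  banach_algebra_mul mul ->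
  directed_set le ->
  net_bounded u ->
  quasi_central mul le u ->
  netL mul le u = netI mul le u ->
  J_weakly_amenable mul (netC mul le u) ->
  J_weakly_amenable mul (netI mul le u) /\ J_weakly_amenable mul (netK mul le u).
Proof.
move=> mul_banach le_directed [B u_bounded] u_qc netL_eq_netI amenC.
split.
- apply: (weakly_amenable_retract (C := netC mul le u)
    (Q := net_proj mul le u) (B := B)) amenC.
  + exact: netI_sub_netC.
  + exact: net_proj_netI.
  + exact: net_proj_id.
  + exact: net_proj_linear.
  + exact: net_proj_bmulr.
  + exact: net_proj_bmull.
  + exact: net_proj_norm.
- apply: (weakly_amenable_retract (C := netC mul le u)
    (Q := fun x => x - net_proj mul le u x) (B := 1 + B)) amenC.
  + exact: netK_sub_netC.
  + exact: subr_net_proj_netK.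
  + by move=> x Kx; rewrite (net_proj_netK le_directed Kx) subr0.
  + by move=> k x y Cx Cy; rewrite net_proj_linear // scalerBr opprD addrACA.
  + by move=> x a Cx; rewrite net_proj_bmulr // bmulBl.
  + by move=> x b Cx; rewrite net_proj_bmull // bmulBr.
  + move=> x Cx; apply: le_trans (ler_normB _ _) _.
    by rewrite mulrDl mul1r lerD2l net_proj_norm.
Qed.
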